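(* Let $G=(V,E)$ be a graph, $c\ge1$, $\epsilon\in[0,1/3)$, let $\kappa(G)=(V,\kappa(E))$ be an $(\epsilon,c)$-kernel of $G$ with tight nodes $\kappa_T(V)$, and let $M$ be a maximal matching in $\kappa(G)$. Let $F_T$ be the set of tight nodes that are not matched in $M$. Then $|F_T|\le(2+6\epsilon)|M|$.
   Context: Let $\mathcal N_v$ denote the set of neighbors of $v$ in $G$. A subgraph $\kappa(G)=(V,\kappa(E))$ with $\kappa(E)\subseteq E$ is given, together with a partition of $V$ into tight nodes $\kappa_T(V)$ and slack nodes $\kappa_S(V)$. For $v\in V$ let $\kappa(\mathcal N_v)=\{u\in\mathcal N_v:(u,v)\in\kappa(E)\}$ (the friends of $v$). For $c\ge1$ and $\epsilon\in[0,1/3)$, $\kappa(G)$ is an $(\epsilon,c)$-kernel of $G$ (w.r.t. this partition) iff: (i) $|\kappa(\mathcal N_v)|\le(1+\epsilon)c$ for all $v\in V$; (ii) $|\kappa(\mathcal N_v)|\ge(1-\epsilon)c$ for all $v\in\kappa_T(V)$; (iii) for all $u,v\in\kappa_S(V)$, if $(u,v)\in E$ then $(u,v)\in\kappa(E)$. *)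

From HB Require Import structures.
From mathcomp Require Import all_boot all_order all_algebra.
Set Implicit Arguments. Unset Strict Implicit. Unset Printing Implicit Defensive.
Import Order.TTheory GRing.Theory Num.Theory.
Local Open Scope ring_scope.

Definition simple_graph (V : finType) (E : rel V) : Prop :=
  (forall u v, E u v = E v u) /\ (forall v, ~~ E v v).

Definition friends (V : finType) (K : rel V) (v : V) : {set V} := [set u | K v u].

(* kappa(G) = (V, K) with tight nodes T (slack nodes = ~: T) is an (eps, c)-kernel of G = (V, E). *)
Definition is_kernel (R : realFieldType) (V : finType) (E K : rel V) (T : {set V})
    (eps c : R) : Prop :=
  [/\ (forall u v, K u v = K v u),
      (forall u v, K u v -> E u v),
      (forall v, (#|friends K v|%:R : R) <= (1 + eps) * c),
      (forall v, v \in T -> (1 - eps) * c <= (#|friends K v|%:R : R)) &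
      (forall u v, u \notin T -> v \notin T -> E u v -> K u v)].

Definition is_matching (V : finType) (K : rel V) (M : {set {set V}}) : Prop :=
  (forall e, e \in M -> exists u v, [/\ u != v, K u v & e = [set u; v]]) /\
  (forall e f, e \in M -> f \in M -> e != f -> [disjoint e & f]).

Definition is_maximal_matching (V : finType) (K : rel V) (M : {set {set V}}) : Prop :=
  is_matching K M /\
  (forall u v, K u v -> exists2 e, e \in M & (u \in e) || (v \in e)).

Definition free_tight (V : finType) (T : {set V}) (M : {set {set V}}) : {set V} :=
  [set v in T | v \notin cover M].

(* Every friend of an unmatched node is matched, by maximality of M.  Counting
   kernel edges from both sides therefore gives
   |F_T| (1 - eps) c <= sum over F_T of friend counts
                     <= sum over matched nodes of friend counts <= 2 |M| (1 + eps) c,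
   and (1 + eps) / (1 - eps) <= 1 + 3 eps for 0 <= eps < 1/3. *)
From HB Require Import structures.
From mathcomp Require Import all_boot all_order all_algebra.
From mathcomp Require Import ring lra.
Set Implicit Arguments. Unset Strict Implicit. Unset Printing Implicit Defensive.
Import Order.TTheory GRing.Theory Num.Theory.
Local Open Scope ring_scope.

Section Matchings.

Variables (V : finType) (K : rel V) (M : {set {set V}}).

Lemma card_cover_matching : is_matching K M -> (#|cover M| <= 2 * #|M|)%N.
Proof.
move=> [Medge _]; apply: leq_trans (leq_card_cover M).1 _.
rewrite (eq_bigr (fun _ => 2%N)) ?sum_nat_const 1?mulnC // => e.
by case/Medge=> u [v [uv _ ->]]; rewrite cards2 uv.
Qed.

Lemma friends_unmatched_sub_cover v :
  is_maximal_matching K M -> v \notin cover M -> friends K v \subset cover M.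
Proof.
move=> [_ Mmax] vC; apply/subsetP => w; rewrite inE => /Mmax [e eM /orP [ve|we]].
  by case/negP: vC; apply/bigcupP; exists e.
by apply/bigcupP; exists e.
Qed.

End Matchings.

Lemma sum_card_friends_sub (V : finType) (K : rel V) (A B : {set V}) :
  (forall u v, K u v = K v u) ->
  (forall v, v \in A -> friends K v \subset B) ->
  (\sum_(v in A) #|friends K v| <= \sum_(w in B) #|friends K w|)%N.
Proof.
move=> Ksym AB.
have count_in S v : #|friends K v :&: S| = (\sum_(w in S) K v w)%N.
  rewrite -sum1_card big_mkcond [RHS]big_mkcond /=; apply: eq_bigr => w _.
  by rewrite !inE; case: (w \in S); case: (K v w).
rewrite (eq_bigr (fun v => \sum_(w in B) K v w)%N); last first.
  by move=> v /AB /setIidPl <-; rewrite count_in.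
rewrite exchange_big /=; apply: leq_sum => w _.
rewrite (eq_bigr (fun v => nat_of_bool (K w v))) => [|v _]; last by rewrite Ksym.
by rewrite -count_in subset_leq_card // subsetIl.
Qed.

Lemma kernel_ratio_bound (R : realFieldType) (eps c f m : R) :
  0 < c -> 0 <= eps -> eps < 1 / 3 -> 0 <= m ->
  f * ((1 - eps) * c) <= m * ((1 + eps) * c) -> f <= (1 + 3 * eps) * m.
Proof.
move=> c0 eps0 eps3 m0 H.
have {}H : f * (1 - eps) <= m * (1 + eps).
  by rewrite -(ler_pM2r c0) -!mulrA.
have slack : 0 <= m * (eps * (1 - 3 * eps)) by rewrite !mulr_ge0 //; lra.
rewrite -(ler_pM2r (_ : 0 < 1 - eps)); last by lra.
apply: le_trans H _.
have -> : (1 + 3 * eps) * m * (1 - eps) = m * (1 + eps) + m * (eps * (1 - 3 * eps)) by ring.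
by rewrite lerDl.
Qed.

Theorem lemma3p12 (R : realFieldType) (V : finType) (E K : rel V) (T : {set V})
    (eps c : R) (M : {set {set V}}) :
  simple_graph E ->
  1 <= c -> 0 <= eps -> eps < 1 / 3 ->
  is_kernel E K T eps c ->
  is_maximal_matching K M ->
  (#|free_tight T M|%:R : R) <= (2 + 6 * eps) * (#|M|%:R : R).
Proof.
move=> _ c1 eps0 eps3 [Ksym _ Kup Klo _] Mmax.
set F := free_tight T M; set C := cover M.
have FC : forall v, v \in F -> friends K v \subset C.
  by move=> v; rewrite inE => /andP [_]; apply: friends_unmatched_sub_cover.
have lower : #|F|%:R * ((1 - eps) * c) <= \sum_(v in F) (#|friends K v|%:R : R).
  by rewrite mulr_natl -sumr_const; apply: ler_sum => v /setIdP [/Klo].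
have upper : \sum_(w in C) (#|friends K w|%:R : R) <= #|C|%:R * ((1 + eps) * c).
  by rewrite mulr_natl -sumr_const; apply: ler_sum => w _; apply: Kup.
have middle := sum_card_friends_sub Ksym FC.
have cover_le : (#|C|%:R : R) <= (2 * #|M|)%:R.
  by rewrite ler_nat; apply: card_cover_matching (proj1 Mmax).
have count : #|F|%:R * ((1 - eps) * c) <= (2 * #|M|)%:R * ((1 + eps) * c).
  apply: (le_trans lower); apply: le_trans (le_trans _ upper) _.
    by rewrite -!natr_sum ler_nat.
  by rewrite ler_pM2r // mulr_gt0 //; lra.
have -> : (2 + 6 * eps) * #|M|%:R = (1 + 3 * eps) * (2 * #|M|)%:R by rewrite natrM; ring.
by apply: kernel_ratio_bound count => //; lra.
Qed.
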